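(* If $X$ and $X'$ are homotopy equivalent topological spaces, then $\mathrm{TC}_g(X)=\mathrm{TC}_g(X')$; that is, the generalized topological complexity depends only on the homotopy type of the space.
   Context: For a space $X$, let $X^I$ be the space of continuous paths $[0,1]\to X$ with the compact-open topology and $\pi_X:X^I\rightarrow X\times X$, $\pi_X(\alpha)=(\alpha(0),\alpha(1))$. The generalized topological complexity $\mathrm{TC}_g(X)$ is the least nonnegative integer $n$ such that $X\times X$ admits a cover by $n+1$ arbitrary (not necessarily open) subsets $A_0,\dots,A_n$ on each of which there exists a continuous local section $s_i:A_i\to X^I$ of $\pi_X$ (i.e. $\pi_X\circ s_i$ is the inclusion); $\mathrm{TC}_g(X)=\infty$ if no such $n$ exists. *)

From HB Require Import structures.
From mathcomp Require Import all_boot all_order all_algebra.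
From mathcomp Require Import all_classical all_reals interval_inference set_interval topology num_topology normedtype subtype_topology function_spaces.
Import numFieldNormedType.Exports.
Import Order.TTheory GRing.Theory Num.Theory.
Local Open Scope classical_set_scope.
Local Open Scope ring_scope.

Set Implicit Arguments.
Unset Strict Implicit.
Unset Printing Implicit Defensive.

Notation unitI R := (set_type [set` (`[0, 1]%R : interval R)]%classic).

Lemma unitI0_mem (R : realType) : (0 : R) \in [set` (`[0, 1]%R : interval R)].
Proof. by apply/mem_set; rewrite /= in_itv /= lexx ler01. Qed.
Lemma unitI1_mem (R : realType) : (1 : R) \in [set` (`[0, 1]%R : interval R)].
Proof. by apply/mem_set; rewrite /= in_itv /= lexx ler01. Qed.

Definition I0 (R : realType) : unitI R := exist _ 0 (unitI0_mem R).
Definition I1 (R : realType) : unitI R := exist _ 1 (unitI1_mem R).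

Notation pathSpace R X :=
  (set_type [set f : {compact-open, unitI R -> X} | continuous f]%classic).

Definition pathFun (R : realType) (X : topologicalType) (g : pathSpace R X)
  : unitI R -> X := val g.

Definition local_section (R : realType) (X : topologicalType)
    (A : set (X * X)) (s : set_type A -> pathSpace R X) : Prop :=
  continuous s /\
  forall a : set_type A,
    pathFun (s a) (I0 R) = (val a).1 /\ pathFun (s a) (I1 R) = (val a).2.

Definition TCg_cover (R : realType) (X : topologicalType) (n : nat) : Prop :=
  exists A : 'I_n.+1 -> set (X * X),
    (forall p : X * X, exists i, A i p) /\
    (forall i, exists s : set_type (A i) -> pathSpace R X, local_section s).

(* TC_g(X) : Some n for the least such n, None standing for infinity. *)
Definition TCg (R : realType) (X : topologicalType) : option nat :=
  match pselect (exists n, `[< TCg_cover R X n >]) with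
  | left h => Some (ex_minn h)
  | right _ => None
  end.

Definition homotopic (R : realType) (X Y : topologicalType) (f g : X -> Y) :=
  exists H : X * unitI R -> Y,
    continuous H /\ (forall x, H (x, I0 R) = f x) /\ (forall x, H (x, I1 R) = g x).

Definition homotopy_equivalent (R : realType) (X Y : topologicalType) :=
  exists (f : X -> Y) (g : Y -> X),
    continuous f /\ continuous g /\
    homotopic R (g \o f) idfun /\ homotopic R (f \o g) idfun.

From mathcomp Require Import all_boot all_order all_algebra.
From mathcomp Require Import all_classical all_reals interval_inference set_interval topology num_topology normedtype subtype_topology function_spaces.
From mathcomp Require Import lra.
Import numFieldNormedType.Exports.
Import Order.TTheory GRing.Theory Num.Theory.
Local Open Scope classical_set_scope.
Local Open Scope ring_scope.
Set Implicit Arguments.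
Unset Strict Implicit.
Unset Printing Implicit Defensive.

(* If H : f \o g ~ id, a section s of pi_X over A gives one of pi_Y over the
   preimage of A under g x g: run H backwards from y1 to f (g y1), follow
   f (s (g y1, g y2)) to f (g y2), then run H forwards to y2.  Hence the
   cover condition, and so TC_g, passes from X to any space Y dominated by X.
   The new section depends continuously on (y1, y2) by the exponential law
   for the compact-open topology, which applies since [0,1] is locally
   compact. *)

Section UnitInterval.
Variable R : realType.

(* Clamping is a continuous retraction of R onto [0,1]; it lets us
   reparametrize paths without carrying membership proofs around. *)
Definition clamp01 (r : R) : R := Num.min (Num.max r 0) 1.

Lemma clamp01_mem (r : R) : clamp01 r \in [set` (`[0, 1]%R : interval R)].
Proof.
apply/mem_set; rewrite /= in_itv /= /clamp01 ge_min lexx orbT andbT.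
by rewrite le_min ler01 le_max lexx orbT.
Qed.

Definition to_unitI (r : R) : unitI R := exist _ (clamp01 r) (clamp01_mem r).

Lemma clamp01_id (r : R) : 0 <= r <= 1 -> clamp01 r = r.
Proof. by case/andP=> r0 r1; rewrite /clamp01 (max_l r0) (min_l r1). Qed.

Lemma to_unitIK : cancel val to_unitI.
Proof.
move=> t; apply: val_inj; apply: clamp01_id.
by case: t => t /= /set_mem; rewrite /= in_itv.
Qed.

Lemma to_unitI0 : to_unitI 0 = I0 R.
Proof. by apply: val_inj; apply: clamp01_id; rewrite lexx ler01. Qed.

Lemma to_unitI1 : to_unitI 1 = I1 R.
Proof. by apply: val_inj; apply: clamp01_id; rewrite lexx ler01. Qed.

Lemma continuous_to_unitI : continuous to_unitI.
Proof.
apply: continuous_comp_initial => x.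
apply: (@continuous_min R R (fun r => Num.max r 0) (fun=> 1)); last exact: cvg_cst.
by apply: (@continuous_max R R id (fun=> 0)) => //; exact: cvg_cst.
Qed.

Lemma compact_unitI : compact [set: unitI R].
Proof.
have -> : [set: unitI R] = to_unitI @` `[0, 1]%classic.
  apply/seteqP; split => // t _; exists (val t); last exact: to_unitIK.
  by case: t => t /= /set_mem.
apply: continuous_compact; last exact: segment_compact.
by apply: continuous_subspaceT => x; exact: continuous_to_unitI.
Qed.

Lemma locally_compact_unitI : locally_compact [set: unitI R].
Proof.
move=> x _; exists setT; first by rewrite withinET; exact: filterT.
by split; [exact: compact_unitI | exact: closedT].
Qed.

End UnitInterval.

Section PathFamilies.
Variables (R : realType) (X T : topologicalType).

Lemma continuous_pathFun (p : pathSpace R X) : continuous (pathFun p).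
Proof. exact: set_mem (valP p). Qed.

Lemma continuous_uncurry_paths (s : T -> pathSpace R X) : continuous s ->
  continuous (fun z : T * unitI R => pathFun (s z.1) z.2).
Proof.
move=> cs; have -> : (fun z : T * unitI R => pathFun (s z.1) z.2) =
    uncurry (fun t => pathFun (s t)) by apply/funext => -[].
apply: continuous_uncurry_regular.
- exact: locally_compact_unitI.
- exact: uniform_regular.
- have cval : continuous (val : pathSpace R X -> {compact-open, unitI R -> X}).
    exact: initial_continuous.
  by move=> t; exact: continuous_comp (cs t) (cval _).
- by move=> t; exact: continuous_pathFun.
Qed.

Definition curry_paths (F : T * unitI R -> X) (cF : continuous F) :
  T -> pathSpace R X :=
  fun t => exist _ (curry F t : {compact-open, unitI R -> X})
    (mem_set ((continuous_curry cF).2 t)).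

Lemma continuous_curry_paths (F : T * unitI R -> X) (cF : continuous F) :
  continuous (curry_paths cF).
Proof. exact/continuous_comp_initial/(continuous_curry cF).1. Qed.

End PathFamilies.

Lemma continuous_pair (T U V : topologicalType) (u : T -> U) (v : T -> V) :
  continuous u -> continuous v -> continuous (fun t => (u t, v t)).
Proof. by move=> cu cv t; apply: cvg_pair; [exact: cu | exact: cv]. Qed.

Lemma continuous_if_le (R : realFieldType) (T Y : topologicalType)
    (phi : T -> R) (c : R) (g h : T -> Y) :
  continuous phi -> continuous g -> continuous h ->
  (forall x, phi x = c -> g x = h x) ->
  continuous (fun x => if phi x <= c then g x else h x).
Proof.
move=> cphi cg ch ggh x U; rewrite nbhs_simpl /=.
have [lt|gt|eq] := ltgtP (phi x) c.
- move=> /cg gU; near=> y => /=.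
  have /ltW -> : phi y < c by near: y; exact: cphi x _ (lt_nbhsl lt).
  by near: y.
- move=> /ch hU; near=> y => /=.
  have -> : (phi y <= c) = false.
    by apply/negbTE; rewrite -ltNge; near: y; exact: cphi x _ (lt_nbhsr gt).
  by near: y.
- move=> /[dup] /cg gU; rewrite ggh // => /ch hU; near=> y => /=.
  by case: ifP => _; near: y.
Unshelve. all: by end_near.
Qed.

Section Concatenation.
Variables (R : realType) (T Y : topologicalType).

Definition reparam (a b : R) (z : T * unitI R) : T * unitI R :=
  (z.1, to_unitI (a + b * val z.2)).

Lemma continuous_reparam (a b : R) : continuous (reparam a b).
Proof.
apply: continuous_pair => z; first exact: cvg_fst.
apply: continuous_comp; last exact: continuous_to_unitI.
apply: cvgD; first exact: cvg_cst.
apply: cvgM; first exact: cvg_cst.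
by apply: continuous_comp; [exact: cvg_snd | exact: initial_continuous].
Qed.

Definition pathcat (p q : T * unitI R -> Y) (z : T * unitI R) : Y :=
  if val z.2 <= 1 / 2 then p (reparam 0 2 z) else q (reparam (-1) 2 z).

Definition pathrev (p : T * unitI R -> Y) : T * unitI R -> Y :=
  p \o reparam 1 (-1).

Lemma continuous_pathcat (p q : T * unitI R -> Y) :
  continuous p -> continuous q -> (forall x, p (x, I1 R) = q (x, I0 R)) ->
  continuous (pathcat p q).
Proof.
move=> cp cq pq; apply: continuous_if_le.
- move=> z; apply: continuous_comp; first exact: cvg_snd.
  exact: initial_continuous.
- by move=> z; apply: continuous_comp; [exact: continuous_reparam | exact: cp].
- by move=> z; apply: continuous_comp; [exact: continuous_reparam | exact: cq].
- move=> [x t] /= t_half; rewrite /reparam /= t_half.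
  have -> : 0 + 2 * (1 / 2 : R) = 1 by lra.
  have -> : -1 + 2 * (1 / 2 : R) = 0 by lra.
  by rewrite to_unitI0 to_unitI1.
Qed.

Lemma pathcat_I0 (p q : T * unitI R -> Y) x :
  pathcat p q (x, I0 R) = p (x, I0 R).
Proof.
rewrite /pathcat /reparam /=; have -> : (0 : R) <= 1 / 2 by lra.
by rewrite mulr0 addr0 to_unitI0.
Qed.

Lemma pathcat_I1 (p q : T * unitI R -> Y) x :
  pathcat p q (x, I1 R) = q (x, I1 R).
Proof.
rewrite /pathcat /reparam /=.
have -> : ((1 : R) <= 1 / 2) = false by apply/negbTE; rewrite -ltNge; lra.
have -> : -1 + 2 * 1 = (1 : R) by lra.
by rewrite to_unitI1.
Qed.

Lemma continuous_pathrev (p : T * unitI R -> Y) :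
  continuous p -> continuous (pathrev p).
Proof.
by move=> cp z; apply: continuous_comp; [exact: continuous_reparam | exact: cp].
Qed.

Lemma pathrev_I0 (p : T * unitI R -> Y) x : pathrev p (x, I0 R) = p (x, I1 R).
Proof. by rewrite /pathrev /reparam /= mulr0 addr0 to_unitI1. Qed.

Lemma pathrev_I1 (p : T * unitI R -> Y) x : pathrev p (x, I1 R) = p (x, I0 R).
Proof. by rewrite /pathrev /reparam /= mulr1 subrr to_unitI0. Qed.

End Concatenation.

Section PullbackSection.
Variables (R : realType) (X Y : topologicalType).
Variables (f : X -> Y) (g : Y -> X) (H : Y * unitI R -> Y).
Hypotheses (cf : continuous f) (cg : continuous g) (cH : continuous H).
Hypotheses (H0 : forall y, H (y, I0 R) = f (g y)) (H1 : forall y, H (y, I1 R) = y).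
Variables (A : set (X * X)) (s : set_type A -> pathSpace R X).
Hypothesis s_section : local_section s.

Let gg (p : Y * Y) : X * X := (g p.1, g p.2).
Let B := gg @^-1` A.

Definition sub_gg (b : set_type B) : set_type A :=
  exist _ (gg (val b)) (mem_set (set_mem (valP b))).

Lemma continuous_sub_gg : continuous sub_gg.
Proof.
apply: continuous_comp_initial; apply: continuous_pair => b.
all: apply: continuous_comp; last exact: cg.
all: apply: continuous_comp; first exact: initial_continuous.
- exact: cvg_fst.
- exact: cvg_snd.
Qed.

Definition homotopy_leg (pr : Y * Y -> Y) (z : set_type B * unitI R) : Y :=
  H (pr (val z.1), z.2).

Definition pushed_path (z : set_type B * unitI R) : Y :=
  f (pathFun (s (sub_gg z.1)) z.2).

Definition pulled_path : set_type B * unitI R -> Y :=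
  pathcat (pathrev (homotopy_leg fst)) (pathcat pushed_path (homotopy_leg snd)).

Lemma continuous_homotopy_leg (pr : Y * Y -> Y) :
  continuous pr -> continuous (homotopy_leg pr).
Proof.
move=> cpr z; apply: continuous_comp; last exact: cH.
move: z; apply: continuous_pair => z; last exact: cvg_snd.
apply: continuous_comp; last exact: cpr.
by apply: continuous_comp; [exact: cvg_fst | exact: initial_continuous].
Qed.

Lemma continuous_pushed_path : continuous pushed_path.
Proof.
move=> z; apply: continuous_comp; last exact: cf.
apply: (continuous_uncurry_paths (s := s \o sub_gg)) => b.
by apply: continuous_comp; [exact: continuous_sub_gg | exact: s_section.1].
Qed.

Lemma continuous_pulled_path : continuous pulled_path.
Proof.
have [_ s_ends] := s_section.
apply: continuous_pathcat.
- by apply/continuous_pathrev/continuous_homotopy_leg => z; exact: cvg_fst.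
- apply: continuous_pathcat; first exact: continuous_pushed_path.
    by apply: continuous_homotopy_leg => z; exact: cvg_snd.
  by move=> b; rewrite /pushed_path (s_ends _).2 /homotopy_leg H0.
- move=> b; rewrite pathrev_I1 pathcat_I0 /pushed_path (s_ends _).1.
  by rewrite /homotopy_leg H0.
Qed.

Lemma pulled_path_section : local_section (curry_paths continuous_pulled_path).
Proof.
split; first exact: continuous_curry_paths.
move=> b; rewrite /pathFun /curry_paths /curry /= /pulled_path.
by rewrite pathcat_I0 pathrev_I0 !pathcat_I1 /homotopy_leg !H1.
Qed.

End PullbackSection.

Lemma TCg_cover_dominated (R : realType) (X Y : topologicalType)
    (f : X -> Y) (g : Y -> X) (n : nat) :
  continuous f -> continuous g -> homotopic R (f \o g) idfun ->
  TCg_cover R X n -> TCg_cover R Y n.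
Proof.
move=> cf cg [H [cH [H0 H1]]] [A [covA secA]].
exists (fun i => (fun p => (g p.1, g p.2)) @^-1` A i); split.
  by move=> p; have [i Ai] := covA (g p.1, g p.2); exists i.
move=> i; have [s s_section] := secA i.
by eexists; exact: (pulled_path_section cf cg cH H0 H1 s_section).
Qed.

Lemma eq_TCg (R : realType) (X Y : topologicalType) :
  (forall n, TCg_cover R X n <-> TCg_cover R Y n) -> TCg R X = TCg R Y.
Proof.
move=> XY; have covers_eq : TCg_cover R X = TCg_cover R Y.
  by apply/funext => n; apply/propext.
by rewrite /TCg covers_eq.
Qed.

Theorem mainTheorem3 (R : realType) (X X' : topologicalType) :
  homotopy_equivalent R X X' -> TCg R X = TCg R X'.
Proof.
move=> [f [g [cf [cg [hgf hfg]]]]]; apply: eq_TCg => n.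
by split; [exact: TCg_cover_dominated hfg | exact: TCg_cover_dominated hgf].
Qed.
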